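(* If a topological space $X$ is the union $X=Y\cup Z$ of two subspaces $Y$ and $Z$ which are both $NWD$-separable, then $X$ is $NWD$-separable.
   Context: A space $X$ is $NWD$-separable if for every sequence $\{D_n:n<\omega\}$ of dense subsets of $X$ there are nowhere dense (in $X$) sets $E_n\subseteq D_n$ such that $\bigcup_{n<\omega}E_n$ is dense in $X$. *)

From HB Require Import structures.
From mathcomp Require Import all_boot all_order all_algebra.
From mathcomp Require Import all_classical all_reals all_analysis.
Set Implicit Arguments. Unset Strict Implicit. Unset Printing Implicit Defensive.
Local Open Scope classical_set_scope.

Definition nowhere_dense (T : topologicalType) (E : set T) : Prop :=
  (closure E)^° = set0.

Definition NWD_separable (T : topologicalType) : Prop :=
  forall D : nat -> set T, (forall n, dense (D n)) ->
  exists E : nat -> set T,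
    (forall n, E n `<=` D n) /\ (forall n, nowhere_dense (E n)) /\
    dense (\bigcup_n E n).

From HB Require Import structures.
From mathcomp Require Import all_boot all_order all_algebra.
From mathcomp Require Import all_classical all_reals all_analysis.
Local Open Scope classical_set_scope.

(* Given dense sets D_n of X, the open sets P_n = int cl (D_n ∩ Y) and
   Q_n = int cl (D_n ∩ Z) have dense union. The traces D_n ∩ P_n are dense only
   in P_n ∩ Y, so before applying NWD-separability of Y they are padded with the
   complement of the closure of a whole colour class of the P_n; the nowhere
   dense pieces obtained then meet every open set meeting Y, unless that set
   escapes the closure of some class. Likewise in Z. Colouring the indices by the
   two coordinates of an enumeration of nat * nat, an open set missing all the
   pieces would contain a nonempty open set escaping both P_n and Q_n for a
   single n, which density of P_n ∪ Q_n forbids. *)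

Section nowhere_dense_sets.
Context {T : topologicalType}.
Implicit Types A B D E O : set T.

Lemma denseS {A B} : A `<=` B -> dense A -> dense B.
Proof.
move=> AB dA O O0 oO; have [x [Ox Ax]] := dA O O0 oO.
by exists x; split; [|exact: AB].
Qed.

Lemma open_closureI {A O} : open O -> O `&` closure A !=set0 -> O `&` A !=set0.
Proof.
move=> oO [x [Ox clAx]].
by have [y [Ay Oy]] := clAx O (open_nbhs_nbhs (conj oO Ox)); exists y.
Qed.

Lemma dense_closureT {D} : dense D -> closure D = setT.
Proof.
move=> dD; apply/seteqP; split=> // x _ B; rewrite nbhsE => -[U [oU Ux] UB].
by have [y [Uy Dy]] := dD U (ex_intro _ x Ux) oU; exists y; split; [|exact: UB].
Qed.

Lemma nowhere_denseE E : nowhere_dense E <-> dense (~` closure E).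
Proof.
split=> [nE O [x Ox] oO | dE].
  apply: contrapT => OclE.
  have OsubclE : O `<=` closure E.
    by move=> y Oy; apply: contrapT => nEy; apply: OclE; exists y.
  have : (closure E)° x by apply: (filterS OsubclE); exact: open_nbhs_nbhs.
  by rewrite nE.
rewrite /nowhere_dense; apply/seteqP; split=> // x intEx.
have [y [intEy nEy]] := dE _ (ex_intro _ x intEx) (@open_interior _ _).
by apply: nEy; exact: interior_subset intEy.
Qed.

Lemma nowhere_denseS {A B} : A `<=` B -> nowhere_dense B -> nowhere_dense A.
Proof.
by rewrite !nowhere_denseE => AB; apply: denseS; apply/subsetC/closureS.
Qed.

Lemma nowhere_denseU {A B} :
  nowhere_dense A -> nowhere_dense B -> nowhere_dense (A `|` B).
Proof.
rewrite !nowhere_denseE closureU setCU; apply: denseI.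
exact/closed_openC/closed_closure.
Qed.

Lemma dense_interiorU {A B} : closed A -> A `|` B = setT -> dense (A° `|` B°).
Proof.
move=> cA AB O [x Ox] oO.
have [[y [Oy nAy]]|nOA] := pselect (O `&` ~` A !=set0).
  exists y; split=> //; right.
  have OAB : O `&` ~` A `<=` B.
    move=> z [_ nAz]; have : (A `|` B) z by rewrite AB.
    by case.
  apply: (filterS OAB); apply: open_nbhs_nbhs; split=> //.
  exact: openI oO (closed_openC cA).
exists x; split=> //; left.
have OA : O `<=` A by move=> z Oz; apply: contrapT => nAz; apply: nOA; exists z.
by apply: (filterS OA); exact: open_nbhs_nbhs.
Qed.

End nowhere_dense_sets.

Lemma nowhere_dense_set_val {X : topologicalType} (S : set X)
    (E : set (set_type S)) :
  nowhere_dense E -> nowhere_dense (set_val @` E).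
Proof.
rewrite !nowhere_denseE => dE O [x Ox] oO.
have [[y [Oy Sy]]|nOS] := pselect (O `&` S !=set0); last first.
  exists x; split=> // clx.
  have [z [Oz [e _ ez]]] := open_closureI oO (ex_intro _ x (conj Ox clx)).
  by apply: nOS; exists z; split=> //; rewrite -ez; exact: set_valP.
have [s [Os]] := dE (set_val @^-1` O) (ex_intro _ (SigSub (mem_set Sy)) Oy)
  (ex_intro2 _ _ O oO erefl).
move=> /existsNP[B /not_implyP[]]; rewrite nbhsE => -[_ [[W oW <-] Ws] WB] EB.
exists (set_val s); split=> // cls.
have [z [[_ Wz] [e Ee ez]]] :=
  open_closureI (openI oO oW) (ex_intro _ _ (conj (conj Os Ws) cls)).
by apply: EB; exists e; split=> //; apply: WB; rewrite /= ez.
Qed.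

Definition class_bigcup {T : Type} (c : nat -> nat) (R : nat -> set T) m :=
  \bigcup_(n in c @^-1` [set m]) R n.

Definition escapes_class {T : topologicalType} (c : nat -> nat)
    (R : nat -> set T) (G : set T) :=
  exists m, G `&` ~` closure (class_bigcup c R m) !=set0.

Lemma closure_class_bigcup {T : topologicalType} (c : nat -> nat)
    (R : nat -> set T) n :
  R n `<=` closure (class_bigcup c R (c n)).
Proof. by move=> x Rx; apply: subset_closure; exists n. Qed.

Lemma NWD_separable_subspace_pieces {X : topologicalType} {S : set X}
    {D O : nat -> set X} (c : nat -> nat) :
  NWD_separable (set_type S) ->
  (forall n, open (O n)) -> (forall n, O n `<=` closure (D n `&` S)) ->
  exists F : nat -> set X, [/\ forall n, F n `<=` D n,
    forall n, nowhere_dense (F n) &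
    forall G, open G -> G `&` S !=set0 -> (forall n, G `&` F n = set0) ->
      escapes_class c O G].
Proof.
move=> NWD_S oO OD.
pose Dm m : set (set_type S) := set_val @^-1`
  (class_bigcup c (fun n => D n `&` O n) m `|` ~` closure (class_bigcup c O m)).
have dDm m : dense (Dm m).
  move=> V [s Vs] [W oW WV]; subst V.
  have [Us|nUs] := pselect (closure (class_bigcup c O m) (set_val s));
    last by exists s; split=> //; right.
  have [x [Wx [n cn Onx]]] := open_closureI oW (ex_intro _ _ (conj Vs Us)).
  have [y [[Wy Ony] [Dy Sy]]] :=
    open_closureI (openI oW (oO n)) (ex_intro _ x (conj (conj Wx Onx) (OD n x Onx))).
  by exists (SigSub (mem_set Sy)); split=> //; left; exists n.
have [E [EDm [nE dE]]] := NWD_S Dm dDm.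
exists (fun n => set_val @` E (c n) `&` (D n `&` O n)); split.
- by move=> n x [_ []].
- move=> n; apply: (nowhere_denseS (@subIsetl _ _ _)); exact: nowhere_dense_set_val.
move=> G oG [x [Gx Sx]] GF.
have [s [Gs [m _ Ems]]] := dE (set_val @^-1` G)
  (ex_intro _ (SigSub (mem_set Sx)) Gx) (ex_intro2 _ _ G oG erefl).
case: (EDm m s Ems) => [[n cnm DOns]|nclUs]; last by exists m; exists (set_val s).
have : (G `&` (set_val @` E (c n) `&` (D n `&` O n))) (set_val s).
  by split=> //; split=> //; exists s; rewrite // cnm.
by rewrite GF.
Qed.

Lemma escaping_open_misses {X : topologicalType} {Y Z : set X}
    {P Q : nat -> set X} {a b : nat -> nat} {G0 : set X} :
  (forall n, dense (P n `|` Q n)) -> (forall n, Q n `<=` closure Z) ->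
  (forall m m', exists n, a n = m /\ b n = m') -> open G0 ->
  (forall G, open G -> G `<=` G0 -> G `&` Y !=set0 -> escapes_class a P G) ->
  (forall G, open G -> G `<=` G0 -> G `&` Z !=set0 -> escapes_class b Q G) ->
  ~ (G0 `&` Y !=set0).
Proof.
move=> dPQ QZ ab_onto oG0 escY escZ G0Y.
have [m [x G1x]] := escY G0 oG0 (@subset_refl _ _) G0Y.
set G1 := G0 `&` _ in G1x.
have oG1 : open G1 by exact/openI/closed_openC/closed_closure.
have G1Z : G1 `&` Z !=set0.
  have [n0 [an0 _]] := ab_onto m 0.
  have [z [G1z [Pz|Qz]]] := dPQ n0 G1 (ex_intro _ x G1x) oG1.
    by case: G1z => _ []; rewrite -an0; exact: closure_class_bigcup.
  exact: open_closureI oG1 (ex_intro _ z (conj G1z (QZ n0 z Qz))).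
have [m' [x' G2x']] := escZ G1 oG1 (@subIsetl _ _ _) G1Z.
set G2 := G1 `&` _ in G2x'.
have oG2 : open G2 by exact/openI/closed_openC/closed_closure.
have [n [an bn]] := ab_onto m m'.
have [w [[[_ nPw] nQw] [Pw|Qw]]] := dPQ n G2 (ex_intro _ x' G2x') oG2.
  by apply: nPw; rewrite -an; exact: closure_class_bigcup.
by apply: nQw; rewrite -bn; exact: closure_class_bigcup.
Qed.

Lemma dense_bigcup_pieces {X : topologicalType} {Y Z : set X}
    {P Q FY FZ : nat -> set X} {a b : nat -> nat} :
  Y `|` Z = setT -> (forall n, dense (P n `|` Q n)) ->
  (forall n, P n `<=` closure Y) -> (forall n, Q n `<=` closure Z) ->
  (forall m m', exists n, a n = m /\ b n = m') ->
  (forall G, open G -> G `&` Y !=set0 -> (forall n, G `&` FY n = set0) ->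
     escapes_class a P G) ->
  (forall G, open G -> G `&` Z !=set0 -> (forall n, G `&` FZ n = set0) ->
     escapes_class b Q G) ->
  dense (\bigcup_n (FY n `|` FZ n)).
Proof.
move=> YZ dPQ PY QZ ab_onto hY hZ G0 [x G0x] oG0.
apply: contrapT => G0F.
have escY G : open G -> G `<=` G0 -> G `&` Y !=set0 -> escapes_class a P G.
  move=> oG GG0 GY; apply: hY => // n; apply/seteqP; split=> // y [Gy FYy].
  by apply: G0F; exists y; split; [exact: GG0 | exists n => //; left].
have escZ G : open G -> G `<=` G0 -> G `&` Z !=set0 -> escapes_class b Q G.
  move=> oG GG0 GZ; apply: hZ => // n; apply/seteqP; split=> // y [Gy FZy].
  by apply: G0F; exists y; split; [exact: GG0 | exists n => //; right].
have : (Y `|` Z) x by rewrite YZ.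
case=> [Yx|Zx].
  exact: (escaping_open_misses dPQ QZ ab_onto oG0 escY escZ) (ex_intro _ x (conj G0x Yx)).
have ba_onto m' m : exists n, b n = m' /\ a n = m.
  by have [n [an bn]] := ab_onto m m'; exists n.
have dQP n : dense (Q n `|` P n) by rewrite setUC.
exact: (escaping_open_misses dQP PY ba_onto oG0 escZ escY) (ex_intro _ x (conj G0x Zx)).
Qed.

Theorem corollary3p16 (X : topologicalType) (Y Z : set X) :
  Y `|` Z = setT ->
  NWD_separable (set_type Y) -> NWD_separable (set_type Z) ->
  NWD_separable X.
Proof.
move=> YZ NWD_Y NWD_Z D dD.
pose p n := odflt (0%N, 0%N) (unpickle n : option (nat * nat)).
have p_onto m m' : exists n, (p n).1 = m /\ (p n).2 = m'.
  by exists (pickle (m, m')); rewrite /p pickleK.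
pose P n := (closure (D n `&` Y))°.
pose Q n := (closure (D n `&` Z))°.
have dPQ n : dense (P n `|` Q n).
  apply: dense_interiorU; first exact: closed_closure.
  by rewrite -closureU -setIUr YZ setIT dense_closureT.
have [FY [FYD nFY escY]] := NWD_separable_subspace_pieces (D := D) (O := P)
  (fun n => (p n).1) NWD_Y (fun n => open_interior _) (fun n => @interior_subset _ _).
have [FZ [FZD nFZ escZ]] := NWD_separable_subspace_pieces (D := D) (O := Q)
  (fun n => (p n).2) NWD_Z (fun n => open_interior _) (fun n => @interior_subset _ _).
exists (fun n => FY n `|` FZ n); split; [|split].
- by move=> n x [/FYD|/FZD].
- by move=> n; apply: nowhere_denseU.
apply: (dense_bigcup_pieces YZ dPQ _ _ p_onto escY escZ) => n;
  by apply: (subset_trans (@interior_subset _ _)); apply: closureS; exact: subIsetr.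
Qed.
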